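(* Let $A,C,E_w,F_w,E_f,F_f$ be given matrices, and let $\boldsymbol{\phi}(\mathbf{x},\mathbf{u})$ be a nonlinear function that is Lipschitz continuous on $\mathcal{D}\times\mathcal{U}$ with Lipschitz constant $\gamma>0$, i.e. $\|\boldsymbol{\phi}(\mathbf{x},\mathbf{u})-\boldsymbol{\phi}(\hat{\mathbf{x}},\mathbf{u})\|\le\gamma\|\mathbf{x}-\hat{\mathbf{x}}\|$ for all $\mathbf{u}\in\mathcal{U}$, $\mathbf{x},\hat{\mathbf{x}}\in\mathcal{D}$. For a matrix $L$ write $\bar{A}=A-LC$, $\bar{E}_w=E_w-LF_w$, $\bar{E}_f=E_f-LF_f$, $\bar{C}=C$, $\bar{F}_w=F_w$, $\bar{F}_f=F_f$. Suppose there exist matrices $L$, $P$, $Q$ (with $P,Q$ symmetric positive definite), scalars $\alpha,\beta>0$, and non-negative scalars $\varepsilon_1,\varepsilon_2$ such that \[ \begin{bmatrix} \bar{A}^\top P + P\bar{A} + \bar{C}^\top\bar{C} + \varepsilon_1\gamma^2 I & P\bar{E}_w + \bar{C}^\top\bar{F}_w & P\\ * & -\alpha^2 I + \bar{F}_w^\top\bar{F}_w & 0\\ * & * & -\varepsilon_1 I \end{bmatrix}\prec 0, \qquad \begin{bmatrix} \bar{A}^\top Q + Q\bar{A} - \bar{C}^\top\bar{C} + \varepsilon_2\gamma^2 I & Q\bar{E}_f - \bar{C}^\top\bar{F}_f & Q\\ * & -\beta^2 I + \bar{F}_f^\top\bar{F}_f & 0\\ * & * & -\varepsilon_2 I \end{bmatrix}\prec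 0 . \] Then there exist non-negative scalars $\epsilon_1,\epsilon_2,\epsilon_3,\epsilon_4$ and real scalars $\rho,\delta,\varphi$ such that, with the same $L$, $P$, $Q$ (and $\alpha,\beta$), \[ \begin{bmatrix} \bar{A}^\top P + P\bar{A} + \bar{C}^\top\bar{C} + (\epsilon_1\rho+\epsilon_2\delta)I & P\bar{E}_w + \bar{C}^\top\bar{F}_w & P + \tfrac12(\epsilon_2\varphi-\epsilon_1)I\\ * & -\alpha^2 I + \bar{F}_w^\top\bar{F}_w & 0\\ * & * & -\epsilon_2 I \end{bmatrix}\prec 0, \] \[ \begin{bmatrix} \bar{A}^\top Q + Q\bar{A} - \bar{C}^\top\bar{C} + (\epsilon_3\rho+\epsilon_4\delta)I & Q\bar{E}_f - \bar{C}^\top\bar{F}_f & Q + \tfrac12(\epsilon_4\varphi-\epsilon_3)I\\ * & -\beta^2 I + \bar{F}_f^\top\bar{F}_f & 0\\ * & * & -\epsilon_4 I \end{bmatrix}\prec 0 . \]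
   Context: $\mathcal{D}$ and $\mathcal{U}$ are the box-shaped feasible state and input regions (Cartesian products of closed intervals). In the matrices, $*$ denotes blocks determined by symmetry, and $M\prec 0$ means $M$ is negative definite. In the paper, $\rho$ plays the role of a one-sided Lipschitz constant and $\delta,\varphi$ of quadratic inner-boundedness constants of $\boldsymbol{\phi}$, i.e. $\langle\boldsymbol{\phi}(\mathbf{x},\mathbf{u})-\boldsymbol{\phi}(\hat{\mathbf{x}},\mathbf{u}),\mathbf{x}-\hat{\mathbf{x}}\rangle\le\rho\|\mathbf{x}-\hat{\mathbf{x}}\|^2$ and $\|\boldsymbol{\phi}(\mathbf{x},\mathbf{u})-\boldsymbol{\phi}(\hat{\mathbf{x}},\mathbf{u})\|^2\le\varphi\langle\mathbf{x}-\hat{\mathbf{x}},\boldsymbol{\phi}(\mathbf{x},\mathbf{u})-\boldsymbol{\phi}(\hat{\mathbf{x}},\mathbf{u})\rangle+\delta\|\mathbf{x}-\hat{\mathbf{x}}\|^2$ on $\mathcal{D}\times\mathcal{U}$. *)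

From HB Require Import structures.
From mathcomp Require Import all_boot all_order all_algebra.
From mathcomp Require Import reals.
Set Implicit Arguments. Unset Strict Implicit. Unset Printing Implicit Defensive.
Import Order.TTheory GRing.Theory Num.Theory.
Local Open Scope ring_scope.

Definition vdot (R : realType) (n : nat) (x y : 'cV[R]_n) : R := (x^T *m y) 0 0.
Definition vnorm (R : realType) (n : nat) (x : 'cV[R]_n) : R := Num.sqrt (vdot x x).

Definition posdef (R : realType) (n : nat) (M : 'M[R]_n) : Prop :=
  M^T = M /\ forall x : 'cV[R]_n, x != 0 -> 0 < vdot x (M *m x).
Definition negdef (R : realType) (n : nat) (M : 'M[R]_n) : Prop :=
  M^T = M /\ forall x : 'cV[R]_n, x != 0 -> vdot x (M *m x) < 0.

Definition in_box (R : realType) (n : nat) (lo hi x : 'cV[R]_n) : Prop :=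
  forall i : 'I_n, lo i 0 <= x i 0 <= hi i 0.

(* The symmetric 3x3 block matrix
     [ M11   M12   M13 ]
     [ *     M22   0   ]
     [ *     *     M33 ]   with "*" filled in by symmetry. *)
Definition blk3 (R : realType) (n p : nat)
  (M11 : 'M[R]_n) (M12 : 'M[R]_(n, p)) (M13 : 'M[R]_n)
  (M22 : 'M[R]_p) (M33 : 'M[R]_n) : 'M[R]_(n + p + n) :=
  block_mx (block_mx M11 M12 M12^T M22) (col_mx M13 0)
           (row_mx M13^T 0) M33.

Definition lipschitz_on (R : realType) (n m : nat)
  (phi : 'cV[R]_n -> 'cV[R]_m -> 'cV[R]_n)
  (Dlo Dhi : 'cV[R]_n) (Ulo Uhi : 'cV[R]_m) (gamma : R) : Prop :=
  forall u x xh, in_box Ulo Uhi u -> in_box Dlo Dhi x -> in_box Dlo Dhi xh ->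
    vnorm (phi x u - phi xh u) <= gamma * vnorm (x - xh).

Definition one_sided_lipschitz_on (R : realType) (n m : nat)
  (phi : 'cV[R]_n -> 'cV[R]_m -> 'cV[R]_n)
  (Dlo Dhi : 'cV[R]_n) (Ulo Uhi : 'cV[R]_m) (rho : R) : Prop :=
  forall u x xh, in_box Ulo Uhi u -> in_box Dlo Dhi x -> in_box Dlo Dhi xh ->
    vdot (phi x u - phi xh u) (x - xh) <= rho * vnorm (x - xh) ^+ 2.

Definition quad_inner_bounded_on (R : realType) (n m : nat)
  (phi : 'cV[R]_n -> 'cV[R]_m -> 'cV[R]_n)
  (Dlo Dhi : 'cV[R]_n) (Ulo Uhi : 'cV[R]_m) (delta varphi : R) : Prop :=
  forall u x xh, in_box Ulo Uhi u -> in_box Dlo Dhi x -> in_box Dlo Dhi xh ->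
    vnorm (phi x u - phi xh u) ^+ 2 <=
      varphi * vdot (x - xh) (phi x u - phi xh u) + delta * vnorm (x - xh) ^+ 2.

From HB Require Import structures.
From mathcomp Require Import all_boot all_order all_algebra.
From mathcomp Require Import reals.
From mathcomp Require Import ring.
Set Implicit Arguments. Unset Strict Implicit. Unset Printing Implicit Defensive.
Import Order.TTheory GRing.Theory Num.Theory.
Local Open Scope ring_scope.

(* A [gamma]-Lipschitz nonlinearity is quadratically inner-bounded with
   [(delta, varphi) = (gamma^2, 0)], and, by [2 <v, w> <= |v|^2 + |w|^2], one-sided
   Lipschitz with [rho = (gamma^2 + 1) / 2].  Taking [e1 = e3 = 0], [e2 = eps1],
   [e4 = eps2] and these constants, the two new LMIs are literally the hypotheses. *)

Lemma vdotE (R : realType) (n : nat) (x y : 'cV[R]_n) :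
  vdot x y = \sum_i x i 0 * y i 0.
Proof. by rewrite /vdot mxE; apply: eq_bigr => i _; rewrite mxE. Qed.

Lemma vdot_ge0 (R : realType) (n : nat) (x : 'cV[R]_n) : 0 <= vdot x x.
Proof. by rewrite vdotE; apply: sumr_ge0 => i _; rewrite -expr2 sqr_ge0. Qed.

Lemma vnorm_sqr (R : realType) (n : nat) (x : 'cV[R]_n) : vnorm x ^+ 2 = vdot x x.
Proof. by rewrite /vnorm sqr_sqrtr // vdot_ge0. Qed.

Lemma vdot_le_AM (R : realType) (n : nat) (x y : 'cV[R]_n) :
  2 * vdot x y <= vdot x x + vdot y y.
Proof.
rewrite !vdotE mulr_sumr -big_split /=; apply: ler_sum => i _.
rewrite -subr_ge0.
have -> : x i 0 * x i 0 + y i 0 * y i 0 - 2 * (x i 0 * y i 0) = (x i 0 - y i 0) ^+ 2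
  by ring.
exact: sqr_ge0.
Qed.

Section LipschitzNonlinearity.
Variables (R : realType) (n m : nat) (phi : 'cV[R]_n -> 'cV[R]_m -> 'cV[R]_n).
Variables (Dlo Dhi : 'cV[R]_n) (Ulo Uhi : 'cV[R]_m) (gamma : R).
Hypothesis phi_lip : lipschitz_on phi Dlo Dhi Ulo Uhi gamma.

Lemma lipschitz_on_sqr u x xh :
  in_box Ulo Uhi u -> in_box Dlo Dhi x -> in_box Dlo Dhi xh ->
  vnorm (phi x u - phi xh u) ^+ 2 <= gamma ^+ 2 * vnorm (x - xh) ^+ 2.
Proof.
move=> hu hx hxh; rewrite -exprMn !expr2.
by apply: ler_pM; rewrite ?sqrtr_ge0 ?phi_lip.
Qed.

Lemma lipschitz_quad_inner_bounded :
  quad_inner_bounded_on phi Dlo Dhi Ulo Uhi (gamma ^+ 2) 0.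
Proof. by move=> u x xh hu hx hxh; rewrite mul0r add0r lipschitz_on_sqr. Qed.

Lemma lipschitz_one_sided_lipschitz :
  one_sided_lipschitz_on phi Dlo Dhi Ulo Uhi ((gamma ^+ 2 + 1) / 2).
Proof.
move=> u x xh hu hx hxh.
have := lipschitz_on_sqr hu hx hxh; rewrite !vnorm_sqr => phi_sqr.
rewrite mulrAC ler_pdivlMr // mulrDl mul1r mulrC.
apply: le_trans (vdot_le_AM _ _) _.
by rewrite lerD2r.
Qed.

End LipschitzNonlinearity.

Theorem theorem2 (R : realType) (n m p q r : nat)
  (A : 'M[R]_n) (C : 'M[R]_(r, n))
  (Ew : 'M[R]_(n, p)) (Fw : 'M[R]_(r, p))
  (Ef : 'M[R]_(n, q)) (Ff : 'M[R]_(r, q))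
  (phi : 'cV[R]_n -> 'cV[R]_m -> 'cV[R]_n)
  (Dlo Dhi : 'cV[R]_n) (Ulo Uhi : 'cV[R]_m) (gamma : R)
  (L : 'M[R]_(n, r)) (P Q : 'M[R]_n) (alpha beta eps1 eps2 : R) :
  0 < gamma ->
  lipschitz_on phi Dlo Dhi Ulo Uhi gamma ->
  posdef P -> posdef Q ->
  0 < alpha -> 0 < beta -> 0 <= eps1 -> 0 <= eps2 ->
  let Ab := A - L *m C in
  let Ewb := Ew - L *m Fw in
  let Efb := Ef - L *m Ff in
  negdef (blk3 (Ab^T *m P + P *m Ab + C^T *m C + (eps1 * gamma ^+ 2)%:M)
               (P *m Ewb + C^T *m Fw) P
               (- (alpha ^+ 2)%:M + Fw^T *m Fw) (- eps1%:M)) ->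
  negdef (blk3 (Ab^T *m Q + Q *m Ab - C^T *m C + (eps2 * gamma ^+ 2)%:M)
               (Q *m Efb - C^T *m Ff) Q
               (- (beta ^+ 2)%:M + Ff^T *m Ff) (- eps2%:M)) ->
  exists (e1 e2 e3 e4 rho delta varphi : R),
    [/\ 0 <= e1, 0 <= e2, 0 <= e3 & 0 <= e4] /\
    one_sided_lipschitz_on phi Dlo Dhi Ulo Uhi rho /\
    quad_inner_bounded_on phi Dlo Dhi Ulo Uhi delta varphi /\
    negdef (blk3 (Ab^T *m P + P *m Ab + C^T *m C + (e1 * rho + e2 * delta)%:M)
                 (P *m Ewb + C^T *m Fw) (P + (2^-1 * (e2 * varphi - e1))%:M)
                 (- (alpha ^+ 2)%:M + Fw^T *m Fw) (- e2%:M)) /\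
    negdef (blk3 (Ab^T *m Q + Q *m Ab - C^T *m C + (e3 * rho + e4 * delta)%:M)
                 (Q *m Efb - C^T *m Ff) (Q + (2^-1 * (e4 * varphi - e3))%:M)
                 (- (beta ^+ 2)%:M + Ff^T *m Ff) (- e4%:M)).
Proof.
move=> _ phi_lip _ _ _ _ eps1_ge0 eps2_ge0 Ab Ewb Efb LMIw LMIf.
exists 0, eps1, 0, eps2, ((gamma ^+ 2 + 1) / 2), (gamma ^+ 2), 0.
split; first by split.
split; first exact: lipschitz_one_sided_lipschitz.
split; first exact: lipschitz_quad_inner_bounded.
have no_cross_term (e : R) : 2^-1 * (e * 0 - 0) = 0 by rewrite mulr0 subr0 mulr0.
by rewrite !no_cross_term !mul0r !add0r !raddf0 !addr0.
Qed.
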